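(* Let $N=\langle V,\mathsf{cp},\mathsf{i},\mathsf{ci},\mathsf{cpt},\mathsf{cit}\rangle$ be a conditionally acyclic TCP-net with $V\neq\emptyset$. Then there is a variable $X\in V$ such that for every $Y\in V\setminus\{X\}$: $(Y,X)\notin\mathsf{cp}$, $(Y,X)\notin\mathsf{i}$, and $\{X,Y\}\notin\mathsf{ci}$.
   Context: Variables $V$ have finite nonempty domains $D(X)$; $D(U)$ denotes the set of assignments to $U\subseteq V$. A TCP-net is a tuple $N=\langle V,\mathsf{cp},\mathsf{i},\mathsf{ci},\mathsf{cpt},\mathsf{cit}\rangle$ where: $\mathsf{cp}$ is a set of directed cp-arcs $(X,Y)$ between distinct variables, with $Pa(X)=\{X' : (X',X)\in\mathsf{cp}\}$; $\mathsf{i}$ is a set of directed i-arcs $(X,Y)$ between distinct variables; $\mathsf{ci}$ is a set of undirected ci-arcs $\{X,Y\}$ between distinct variables, each with a nonempty selector set $S(X,Y)\subseteq V\setminus\{X,Y\}$; $\mathsf{cpt}$ assigns to each variable $X$ a table $CPT(X)$ mapping each assignment to $Pa(X)$ to a strict partial order on $D(X)$; $\mathsf{cit}$ assigns to each ci-arc $\gamma=\{X,Y\}$ a table $CIT(\gamma)$, a possibly partial map from $D(S(X,Y))$ to $\{X\rhd Y,\ Y\rhd X\}$. The dependency graph $N^\star$ has vertex set $V$, the cp-arcs and i-arcs as directed edges, the ci-arcs as undirected edges, and additionally, for every ci-arc $\{X_i,X_j\}$ and every $X_k\in S(X_i,X_j)$, the directed edges $(X_k,X_i)$ and $(X_k,X_j)$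 (if not already present). Let $S(N)$ be the union of all selector sets. For $w\in D(S(N))$, the $w$-directed graph of $N^\star$ consists of the vertices and directed edges of $N^\star$ together with, for every ci-arc $\{X_i,X_j\}$ whose CIT maps the restriction of $w$ to $S(X_i,X_j)$ to $X_i\rhd X_j$, a directed edge $(X_i,X_j)$ (if not already present). $N$ is conditionally acyclic iff for every $w\in D(S(N))$ the $w$-directed graph of $N^\star$ is acyclic. *)

From mathcomp Require Import all_boot.
Set Implicit Arguments. Unset Strict Implicit. Unset Printing Implicit Defensive.

(* An assignment to a subset U is
   represented by any total assignment, with functions of D(U) represented
   as functions of total assignments that only depend on the values on U. *)
Definition assignment (V : finType) (D : V -> finType) := forall x : V, D x.

Definition agree_on (V : finType) (D : V -> finType) (U : {set V})
  (w1 w2 : assignment D) := forall x, x \in U -> w1 x = w2 x.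

Unset Implicit Arguments.
Record tcpnet (V : finType) := TCPNet {
  dom : V -> finType;
  dom_nonempty : forall x, 0 < #|dom x|;
  cp : rel V;
  cp_irr : forall x, ~~ cp x x;
  iarc : rel V;
  iarc_irr : forall x, ~~ iarc x x;
  ci : rel V;
  ci_sym : forall x y, ci x y = ci y x;
  ci_irr : forall x, ~~ ci x x;
  sel : V -> V -> {set V};
  sel_sym : forall x y, sel x y = sel y x;
  sel_nonempty : forall x y, ci x y -> sel x y != set0;
  sel_sub : forall x y, ci x y -> x \notin sel x y /\ y \notin sel x y;
  cpt : forall x : V, assignment dom -> rel (dom x);
  cpt_local : forall x w1 w2, agree_on [set y | cp y x] w1 w2 -> cpt x w1 =2 cpt x w2;
  cpt_irr : forall x w (a : dom x), ~~ cpt x w a a;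
  cpt_trans : forall x w (a b c : dom x), cpt x w a b -> cpt x w b c -> cpt x w a c;
  (* CIT({X,Y}): partial map D(S(X,Y)) -> {X |> Y, Y |> X};
     cit x y w = Some z means z is the more important variable,
     None means undefined. *)
  cit : V -> V -> assignment dom -> option V;
  cit_sym : forall x y w, cit x y w = cit y x w;
  cit_val : forall x y w z, ci x y -> cit x y w = Some z -> (z == x) || (z == y);
  cit_local : forall x y w1 w2, agree_on (sel x y) w1 w2 -> cit x y w1 = cit x y w2
}.
Set Implicit Arguments.
Arguments cpt {V} t x w : rename.
Arguments cp {V} t _ _.
Arguments iarc {V} t _ _.
Arguments ci {V} t _ _.
Arguments dom {V} t _.
Arguments cit {V} t x y w.
Arguments sel {V} t x y.

Definition wedge (V : finType) (N : tcpnet V) (w : assignment (dom N)) : rel V :=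
  fun x y =>
    [|| cp N x y, iarc N x y,
        [exists z, ci N y z && (x \in sel N y z)]
      | ci N x y && (cit N x y w == Some x)].

Definition acyclic (V : finType) (e : rel V) : Prop :=
  forall x y, e x y -> ~~ connect e y x.

(* Conditional acyclicity: for every assignment w (whose restriction to
   S(N) is what matters) the w-directed graph is acyclic. *)
Definition cond_acyclic (V : finType) (N : tcpnet V) : Prop :=
  forall w : assignment (dom N), acyclic (@wedge V N w).

From mathcomp Require Import all_boot.

(* A vertex minimizing the number of its ancestors is a source: an edge [y -> x]
   would make the ancestors of [y] a proper subset of those of [x], since [x]
   itself is not an ancestor of [y] by acyclicity. *)
Lemma acyclic_source {V : finType} {e : rel V} :
  0 < #|V| -> acyclic e -> exists x, forall y, ~~ e y x.
Proof.
move=> /card_gt0P [x0 _] ac.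
pose ancestors x := [set y | connect e y x].
have [x _ x_min] := arg_minnP (fun x => #|ancestors x|) (isT : xpredT x0).
exists x => y; apply/negP => eyx.
have anc_sub : ancestors y \proper ancestors x.
  rewrite properE; apply/andP; split.
    by apply/subsetP => z; rewrite !inE => /connect_trans; apply; apply: connect1.
  apply/subsetP => /(_ x); rewrite !inE connect0 => /(_ isT).
  by apply/negP; apply: ac.
by have := proper_card anc_sub; rewrite ltnNge x_min.
Qed.

Definition some_assignment {V : finType} (N : tcpnet V) : assignment (dom N) :=
  fun x => enum_val (Ordinal (@dom_nonempty V N x)).

(* Every selector of a ci-arc [{x, y}] points into both [x] and [y]. *)
Lemma wedge_source_no_ci {V : finType} (N : tcpnet V) (w : assignment (dom N))
    (x y : V) :
  (forall z, ~~ @wedge V N w z x) -> ~~ ci N x y.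
Proof.
move=> x_src; apply/negP => ci_xy.
have /set0Pn [z z_sel] := @sel_nonempty V N _ _ ci_xy.
have /negP := x_src z; apply.
by rewrite /wedge; apply/or4P; apply: Or43; apply/existsP; exists y; rewrite ci_xy.
Qed.

Theorem lemma3 (V : finType) (N : tcpnet V) :
  0 < #|V| -> cond_acyclic N ->
  exists X : V, forall Y : V, Y != X ->
    [/\ ~~ cp N Y X, ~~ iarc N Y X & ~~ ci N X Y].
Proof.
move=> V_gt0 N_acyclic.
have [X X_src] := acyclic_source V_gt0 (N_acyclic (some_assignment N)).
exists X => Y _.
have /norP [no_cp /norP [no_iarc _]] := X_src Y.
by split=> //; apply: wedge_source_no_ci X_src.
Qed.
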